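(* For every $m\in\mathbb N_0$, the polynomial $P_m$ is left hyperholomorphic on $\mathbb H$ and $P_m(0,x_1,x_2,x_3)=(x_1\mathbf e_1+x_2\mathbf e_2+x_3\mathbf e_3)^m$; that is, $CK\big((x_1\mathbf e_1+x_2\mathbf e_2+x_3\mathbf e_3)^m\big)=P_m$. In particular $P_1(x)=\zeta_1(x)\mathbf e_1+\zeta_2(x)\mathbf e_2+\zeta_3(x)\mathbf e_3=3x_0+x_1\mathbf e_1+x_2\mathbf e_2+x_3\mathbf e_3$.
   Context: Quaternions: $x=x_0+\underline{x}$ with $\underline{x}=x_1\mathbf e_1+x_2\mathbf e_2+x_3\mathbf e_3$, $\overline{x}=x_0-\underline{x}$. Left hyperholomorphic means annihilated by $D=\partial_{x_0}+\mathbf e_1\partial_{x_1}+\mathbf e_2\partial_{x_2}+\mathbf e_3\partial_{x_3}$; $CK(\varphi)$ denotes the unique left hyperholomorphic extension of a real analytic function $\varphi$ of $(x_1,x_2,x_3)$ from $x_0=0$. Fueter variables: $\zeta_j(x)=x_j-\mathbf e_jx_0$. For $m\ge0$ and $0\le j\le m$ let $T^m_j=\frac{2(m-j+1)}{(m+1)(m+2)}$, $c_m=\sum_{j=0}^m(-1)^jT^m_j$, and $P_m(x)=\frac1{c_m}\sum_{j=0}^mT^m_j\,x^{m-j}\overline{x}^{\,j}$. *)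

(* quaternions over an abstract realType R,
   represented as row vectors 'rV[R]_4 (components x_0, x_1, x_2, x_3),
   which carries the normed-space structure needed for derivatives. *)
From HB Require Import structures.
From mathcomp Require Import all_boot all_order all_algebra.
From mathcomp Require Import all_classical all_reals.
From mathcomp Require Import topology normedtype derive.
Set Implicit Arguments. Unset Strict Implicit. Unset Printing Implicit Defensive.
Import Order.TTheory GRing.Theory Num.Theory.
Import numFieldNormedType.Exports.
Local Open Scope ring_scope.

Section Quaternions.
Variable R : realType.

Definition quat := 'rV[R]_4.

Definition qmk (a b c d : R) : quat := \row_(i < 4) [:: a; b; c; d]`_i.

Definition q0 (x : quat) : R := x 0 (inord 0).
Definition q1 (x : quat) : R := x 0 (inord 1).
Definition q2 (x : quat) : R := x 0 (inord 2).
Definition q3 (x : quat) : R := x 0 (inord 3).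

(* Hamilton product, e1 e2 = e3, e2 e3 = e1, e3 e1 = e2, e_i^2 = -1 *)
Definition qmul (p q : quat) : quat :=
  qmk (q0 p * q0 q - q1 p * q1 q - q2 p * q2 q - q3 p * q3 q)
      (q0 p * q1 q + q1 p * q0 q + q2 p * q3 q - q3 p * q2 q)
      (q0 p * q2 q - q1 p * q3 q + q2 p * q0 q + q3 p * q1 q)
      (q0 p * q3 q + q1 p * q2 q - q2 p * q1 q + q3 p * q0 q).

Definition qone : quat := qmk 1 0 0 0.
Definition qe1 : quat := qmk 0 1 0 0.
Definition qe2 : quat := qmk 0 0 1 0.
Definition qe3 : quat := qmk 0 0 0 1.

Definition qconj (x : quat) : quat := qmk (q0 x) (- q1 x) (- q2 x) (- q3 x).

Definition qpow (x : quat) (n : nat) : quat := iter n (qmul x) qone.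

Definition Dop (f : quat -> quat) (x : quat) : quat :=
  'D_qone f x + qmul qe1 ('D_qe1 f x) + qmul qe2 ('D_qe2 f x)
  + qmul qe3 ('D_qe3 f x).

Definition left_hyperholomorphic (f : quat -> quat) : Prop :=
  (forall x, differentiable f x) /\ (forall x, Dop f x = 0).

Definition is_CK_extension (phi : R -> R -> R -> quat) (F : quat -> quat) :=
  left_hyperholomorphic F /\
  (forall x1 x2 x3, F (qmk 0 x1 x2 x3) = phi x1 x2 x3).

Definition zeta1 (x : quat) : quat := qmk (q1 x) 0 0 0 - q0 x *: qe1.
Definition zeta2 (x : quat) : quat := qmk (q2 x) 0 0 0 - q0 x *: qe2.
Definition zeta3 (x : quat) : quat := qmk (q3 x) 0 0 0 - q0 x *: qe3.

Definition Tcoef (m j : nat) : R :=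
  (2 * (m - j + 1)%:R) / ((m + 1)%:R * (m + 2)%:R).

Definition cm (m : nat) : R := \sum_(j < m.+1) (-1) ^+ j * Tcoef m j.

Definition Pm (m : nat) (x : quat) : quat :=
  (cm m)^-1 *: \sum_(j < m.+1)
     Tcoef m j *: qmul (qpow x (m - j)) (qpow (qconj x) j).

End Quaternions.

(* Write W_{a,b}(x) = x^a xbar^b, so that
   P_m = c_m^-1 * sum_j T^m_j W_{m-j,j}.  The Cauchy-Riemann-Fueter operator
   D = sum_u u d_u (u = 1, e1, e2, e3) is a "contraction" of the directional
   derivative u |-> d_u f(x), which for monomials is a sum of terms
   A u B (from the x-factors) and C ubar E (from the xbar-factors).  The two
   identities  sum_u u A u B = -2 Abar B  and  sum_u u C ubar E = 2 (C + Cbar) E,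
   together with the fact that x and xbar commute, give for a + b = m
       D W_{a,b}(x) = 2 (S_b - S_a + b M_a),
   where M_k = W_{k,m-1-k}(x) and S_n = M_0 + ... + M_{n-1}.  With the weights
   T^m_j, proportional to m - j + 1, these contributions cancel by a purely
   additive identity about partial sums, so D P_m = 0.  On the hyperplane
   x0 = 0 we have xbar = -x, hence W_{m-j,j} = (-1)^j x^m and P_m = x^m there,
   the normalisation c_m being positive. *)
From Pilot Require Import Defs.
From HB Require Import structures.
From mathcomp Require Import all_boot all_order all_algebra.
From mathcomp Require Import all_classical all_reals.
From mathcomp Require Import topology normedtype derive.
From mathcomp Require Import zify ring lra.
Import GRing.Theory Num.Theory.
Import numFieldNormedType.Exports.
Local Open Scope ring_scope.

Section QuaternionCoordinates.
Context {R : realType}.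
Local Notation quat := (quat R).
Implicit Types x : quat.

Lemma q0_qmk (a b c d : R) : q0 (qmk a b c d) = a.
Proof. by rewrite /q0 mxE inordK. Qed.
Lemma q1_qmk (a b c d : R) : q1 (qmk a b c d) = b.
Proof. by rewrite /q1 mxE inordK. Qed.
Lemma q2_qmk (a b c d : R) : q2 (qmk a b c d) = c.
Proof. by rewrite /q2 mxE inordK. Qed.
Lemma q3_qmk (a b c d : R) : q3 (qmk a b c d) = d.
Proof. by rewrite /q3 mxE inordK. Qed.
Definition qmkK := (q0_qmk, q1_qmk, q2_qmk, q3_qmk).

Lemma qmk_coord x : qmk (q0 x) (q1 x) (q2 x) (q3 x) = x.
Proof.
apply/rowP => i; rewrite mxE.
by case: i => [[|[|[|[|//]]]] ?]; congr (x _ _); apply/val_inj; rewrite /= inordK.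
Qed.

Lemma quat_ind (P : quat -> Prop) :
  (forall a b c d, P (qmk a b c d)) -> forall x, P x.
Proof. by move=> Pmk x; rewrite -(qmk_coord x). Qed.

Lemma qmk0 : qmk 0 0 0 0 = 0 :> quat.
Proof. by apply/rowP => i; rewrite !mxE; case: i => [[|[|[|[|//]]]] ?]. Qed.
Lemma qmkD (a b c d a' b' c' d' : R) :
  qmk a b c d + qmk a' b' c' d' = qmk (a + a') (b + b') (c + c') (d + d').
Proof. by apply/rowP => i; rewrite !mxE; case: i => [[|[|[|[|//]]]] ?]. Qed.
Lemma qmkN (a b c d : R) : - qmk a b c d = qmk (- a) (- b) (- c) (- d).
Proof. by apply/rowP => i; rewrite !mxE; case: i => [[|[|[|[|//]]]] ?]. Qed.
Lemma qmkZ (k a b c d : R) :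
  k *: qmk a b c d = qmk (k * a) (k * b) (k * c) (k * d).
Proof. by apply/rowP => i; rewrite !mxE; case: i => [[|[|[|[|//]]]] ?]. Qed.

Lemma qmul_qmk (a b c d a' b' c' d' : R) :
  qmul (qmk a b c d) (qmk a' b' c' d') =
  qmk (a * a' - b * b' - c * c' - d * d') (a * b' + b * a' + c * d' - d * c')
      (a * c' - b * d' + c * a' + d * b') (a * d' + b * c' - c * b' + d * a').
Proof. by rewrite /qmul !qmkK. Qed.
Lemma qconj_qmk (a b c d : R) : qconj (qmk a b c d) = qmk a (- b) (- c) (- d).
Proof. by rewrite /qconj !qmkK. Qed.

End QuaternionCoordinates.

(* Decides polynomial identities between quaternion expressions: every
   quaternion variable is split into its four coordinates, the expression is
   normalised to a single qmk, and the four coordinates are compared by ring. *)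
Ltac quat_ring :=
  repeat match goal with x : Defs.quat _ |- _ => revert x end;
  repeat match goal with
  | |- forall _ : Defs.quat _, _ => apply: quat_ind => ? ? ? ?
  | |- forall _, _ => intro
  end;
  rewrite /qone /qe1 /qe2 /qe3 /zeta1 /zeta2 /zeta3 -?qmk0 ?qmkK;
  repeat progress rewrite ?qconj_qmk ?qmul_qmk ?qmkK ?qmkN ?qmkD ?qmkZ;
  congr qmk; ring.

Section QuaternionAlgebra.
Context {R : realType}.
Local Notation quat := (quat R).
Local Notation e1 := (qe1 R).
Local Notation e2 := (qe2 R).
Local Notation e3 := (qe3 R).
Implicit Types p q r x : quat.

Lemma qmk_basis (a b c d : R) :
  qmk a b c d = a *: qone R + b *: e1 + c *: e2 + d *: e3.
Proof. quat_ring. Qed.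

Lemma qmulA p q r : qmul p (qmul q r) = qmul (qmul p q) r.
Proof. quat_ring. Qed.
Lemma qmul1l q : qmul (qone R) q = q.
Proof. quat_ring. Qed.
Lemma qmul1r q : qmul q (qone R) = q.
Proof. quat_ring. Qed.
Lemma qmul0l q : qmul 0 q = 0.
Proof. quat_ring. Qed.
Lemma qmul0r q : qmul q 0 = 0.
Proof. quat_ring. Qed.
Lemma qmulDl p q r : qmul (p + q) r = qmul p r + qmul q r.
Proof. quat_ring. Qed.
Lemma qmulDr p q r : qmul r (p + q) = qmul r p + qmul r q.
Proof. quat_ring. Qed.
Lemma qmulZl (k : R) p q : qmul (k *: p) q = k *: qmul p q.
Proof. quat_ring. Qed.
Lemma qmulZr (k : R) p q : qmul p (k *: q) = k *: qmul p q.
Proof. quat_ring. Qed.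
Lemma qconj_mul p q : qconj (qmul p q) = qmul (qconj q) (qconj p).
Proof. quat_ring. Qed.
Lemma qconjK p : qconj (qconj p) = p.
Proof. quat_ring. Qed.
Lemma qconj1 : qconj (qone R) = qone R.
Proof. quat_ring. Qed.
Lemma qmul_conjC p : qmul p (qconj p) = qmul (qconj p) p.
Proof. quat_ring. Qed.

Lemma qmul_sumr n (F : 'I_n -> quat) q :
  qmul q (\sum_(i < n) F i) = \sum_(i < n) qmul q (F i).
Proof. exact: (big_morph _ (fun a b => qmulDr a b q) (qmul0r q)). Qed.
Lemma qmul_suml n (F : 'I_n -> quat) q :
  qmul (\sum_(i < n) F i) q = \sum_(i < n) qmul (F i) q.
Proof. exact: (big_morph _ (fun a b => qmulDl a b q) (qmul0l q)). Qed.

Lemma qpow0 x : qpow x 0%N = qone R.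
Proof. by []. Qed.
Lemma qpowS x n : qpow x n.+1 = qmul x (qpow x n).
Proof. by []. Qed.
Lemma qpowD x a b : qmul (qpow x a) (qpow x b) = qpow x (a + b).
Proof. by elim: a => [|a IH]; rewrite ?qpow0 ?qmul1l // qpowS -qmulA IH. Qed.
Lemma qpowSr x n : qpow x n.+1 = qmul (qpow x n) x.
Proof. by rewrite -addn1 -qpowD [qpow x 1]/= qmul1r. Qed.
Lemma qpowZ (k : R) x n : qpow (k *: x) n = k ^+ n *: qpow x n.
Proof.
elim: n => [|n IH]; first by rewrite !qpow0 scale1r.
by rewrite qpowS IH qmulZl qmulZr scalerA exprS.
Qed.
Lemma qconj_pow x n : qconj (qpow x n) = qpow (qconj x) n.
Proof.
by elim: n => [|n IH]; rewrite ?qpow0 ?qconj1 // qpowS qconj_mul IH -qpowSr.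
Qed.

Lemma qpow_commute_l x y n : qmul x y = qmul y x ->
  qmul (qpow x n) y = qmul y (qpow x n).
Proof.
move=> xy; elim: n => [|n IH]; first by rewrite qpow0 qmul1l qmul1r.
by rewrite qpowS -qmulA IH qmulA xy -qmulA.
Qed.
Lemma qpow_commute x y a b : qmul x y = qmul y x ->
  qmul (qpow x a) (qpow y b) = qmul (qpow y b) (qpow x a).
Proof. by move=> xy; apply: qpow_commute_l; symmetry; apply: qpow_commute_l. Qed.

Definition fueter (L : quat -> quat) : quat :=
  L (qone R) + qmul e1 (L e1) + qmul e2 (L e2) + qmul e3 (L e3).

Lemma eq_fueter {L L' : quat -> quat} : L =1 L' -> fueter L = fueter L'.
Proof. by move=> LL'; rewrite /fueter !LL'. Qed.

Lemma fueterD (L L' : quat -> quat) :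
  fueter (fun u => L u + L' u) = fueter L + fueter L'.
Proof.
rewrite /fueter !qmulDr.
by rewrite (addrACA (L _)) (addrACA (L _ + _)) (addrACA (L _ + _ + _)).
Qed.

Lemma fueterZ (k : R) (L : quat -> quat) :
  fueter (fun u => k *: L u) = k *: fueter L.
Proof. by rewrite /fueter !qmulZr !scalerDr. Qed.

Lemma fueter_sum n (L : 'I_n -> quat -> quat) :
  fueter (fun u => \sum_(i < n) L i u) = \sum_(i < n) fueter (L i).
Proof.
elim: n L => [|n IH] L.
  rewrite big_ord0 (@eq_fueter _ (fun=> 0)); last by move=> u; rewrite big_ord0.
  by rewrite /fueter !qmul0r !addr0.
rewrite big_ord_recr /= -IH -fueterD; apply: eq_fueter => u; exact: big_ord_recr.
Qed.

(* the two contraction identities behind D applied to x^a xbar^b *)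
Lemma fueter_sandwich p q :
  fueter (fun u => qmul (qmul p u) q) = qmul ((-2) *: qconj p) q.
Proof. rewrite /fueter; quat_ring. Qed.

Lemma fueter_conj_sandwich p q :
  fueter (fun u => qmul (qmul p (qconj u)) q) = qmul (2 *: (p + qconj p)) q.
Proof. rewrite /fueter; quat_ring. Qed.

End QuaternionAlgebra.

Section QuaternionCalculus.
Context {R : realType}.
Local Notation quat := (quat R).
Implicit Types (f g : quat -> quat) (x v : quat).

Lemma differentiable_entry f x (i : 'I_4) :
  differentiable f x -> differentiable (fun y => f y 0 i) x.
Proof. by move=> df; exact: (differentiable_comp df (differentiable_coord _ 0 i)). Qed.

Lemma derive_entry f x v (i : 'I_4) :
  differentiable f x -> 'D_v (fun y => f y 0 i) x = 'D_v f x 0 i.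
Proof. by move=> df; rewrite (derive_mx (@diff_derivable _ _ _ _ _ v df)) mxE. Qed.

Lemma derive_q0 f x v : differentiable f x ->
  'D_v (fun y => q0 (f y)) x = q0 ('D_v f x).
Proof. exact: derive_entry. Qed.
Lemma derive_q1 f x v : differentiable f x ->
  'D_v (fun y => q1 (f y)) x = q1 ('D_v f x).
Proof. exact: derive_entry. Qed.
Lemma derive_q2 f x v : differentiable f x ->
  'D_v (fun y => q2 (f y)) x = q2 ('D_v f x).
Proof. exact: derive_entry. Qed.
Lemma derive_q3 f x v : differentiable f x ->
  'D_v (fun y => q3 (f y)) x = q3 ('D_v f x).
Proof. exact: derive_entry. Qed.
Definition derive_coord := (derive_q0, derive_q1, derive_q2, derive_q3).

Lemma differentiable_qmk (F0 F1 F2 F3 : quat -> R) x :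
  differentiable F0 x -> differentiable F1 x -> differentiable F2 x ->
  differentiable F3 x -> differentiable (fun y => qmk (F0 y) (F1 y) (F2 y) (F3 y)) x.
Proof.
move=> d0 d1 d2 d3; under eq_fun do rewrite qmk_basis.
by repeat apply: differentiableD; exact: differentiableZl.
Qed.

Lemma derive_qmk (F0 F1 F2 F3 : quat -> R) x v :
  differentiable F0 x -> differentiable F1 x -> differentiable F2 x ->
  differentiable F3 x ->
  'D_v (fun y => qmk (F0 y) (F1 y) (F2 y) (F3 y)) x =
  qmk ('D_v F0 x) ('D_v F1 x) ('D_v F2 x) ('D_v F3 x).
Proof.
move=> d0 d1 d2 d3; apply/rowP => i.
rewrite derive_mx ?mxE; last exact/diff_derivable/differentiable_qmk.
rewrite (_ : (fun t => _) = fun t => [:: F0 t; F1 t; F2 t; F3 t]`_i);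
  last by apply/funext => t; rewrite mxE.
by case: i => [[|[|[|[|//]]]] ?].
Qed.

Lemma derive_add (F G : quat -> R) x v :
  differentiable F x -> differentiable G x ->
  'D_v (fun y => F y + G y) x = 'D_v F x + 'D_v G x.
Proof. by move=> dF dG; apply: deriveD; exact: diff_derivable. Qed.
Lemma derive_sub (F G : quat -> R) x v :
  differentiable F x -> differentiable G x ->
  'D_v (fun y => F y - G y) x = 'D_v F x - 'D_v G x.
Proof. by move=> dF dG; apply: deriveB; exact: diff_derivable. Qed.
Lemma derive_opp (F : quat -> R) x v :
  differentiable F x -> 'D_v (fun y => - F y) x = - 'D_v F x.
Proof. by move=> dF; apply: deriveN; exact: diff_derivable. Qed.
Lemma derive_mul (F G : quat -> R) x v :
  differentiable F x -> differentiable G x ->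
  'D_v (fun y => F y * G y) x = 'D_v F x * G x + F x * 'D_v G x.
Proof.
move=> dF dG; rewrite deriveM; [|exact: diff_derivable..].
by rewrite addrC [_ * G x]mulrC.
Qed.

Ltac differentiable_poly :=
  repeat first [ apply: differentiable_entry | apply: differentiableD
               | apply: differentiableB | apply: differentiableM
               | apply: differentiableN ].

Lemma differentiable_qmul f g x : differentiable f x -> differentiable g x ->
  differentiable (fun y => qmul (f y) (g y)) x.
Proof. by move=> df dg; apply: differentiable_qmk; differentiable_poly. Qed.

Lemma derive_qmul f g x v : differentiable f x -> differentiable g x ->
  'D_v (fun y => qmul (f y) (g y)) x = qmul ('D_v f x) (g x) + qmul (f x) ('D_v g x).
Proof.
move=> df dg; rewrite {1}/qmul derive_qmk; try by differentiable_poly.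
rewrite !(derive_sub, derive_add, derive_mul); try by differentiable_poly.
by rewrite !derive_coord //; move: ('D_v f x) ('D_v g x) (f x) (g x); quat_ring.
Qed.

Lemma differentiable_qconj f x :
  differentiable f x -> differentiable (fun y => qconj (f y)) x.
Proof. by move=> df; apply: differentiable_qmk; differentiable_poly. Qed.

Lemma derive_qconj f x v :
  differentiable f x -> 'D_v (fun y => qconj (f y)) x = qconj ('D_v f x).
Proof.
move=> df; rewrite {1}/qconj derive_qmk; try by differentiable_poly.
by rewrite !derive_opp ?derive_coord //; differentiable_poly.
Qed.

Lemma differentiable_qpow f n x :
  differentiable f x -> differentiable (fun y => qpow (f y) n) x.
Proof.
move=> df; elim: n => [|n IH]; first exact: differentiable_cst.
exact: differentiable_qmul.
Qed.

Lemma derive_qpow f n x v : differentiable f x ->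
  'D_v (fun y => qpow (f y) n) x =
  \sum_(k < n) qmul (qmul (qpow (f x) k) ('D_v f x)) (qpow (f x) (n - k.+1)).
Proof.
move=> df; elim: n => [|n IH]; first by rewrite big_ord0; exact: derive_cst.
rewrite (derive_qmul _ _ _ v df (differentiable_qpow _ n _ df)) IH big_ord_recl.
rewrite qpow0 qmul1l subSS subn0 qmul_sumr; congr (_ + _).
by apply: eq_bigr => k _; rewrite !qmulA -qpowS.
Qed.

Lemma differentiable_id_quat x : differentiable (fun y : quat => y) x.
Proof. have did : differentiable (@id quat) x by []. exact: did. Qed.

Lemma differentiable_sum_quat n (F : 'I_n -> quat -> quat) x :
  (forall i, differentiable (F i) x) ->
  differentiable (fun y => \sum_(i < n) F i y) x.
Proof. by move=> dF; rewrite -fct_sumE; exact: differentiable_sum. Qed.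

Lemma Dop_fueter f x : Dop f x = fueter (fun u => 'D_u f x).
Proof. by []. Qed.

Lemma Dop_scale (k : R) f x : differentiable f x ->
  Dop (fun y => k *: f y) x = k *: Dop f x.
Proof.
move=> df; rewrite !Dop_fueter -fueterZ; apply: eq_fueter => u.
by apply: deriveZ; exact: diff_derivable.
Qed.

Lemma Dop_sum n (F : 'I_n -> quat -> quat) x : (forall i, differentiable (F i) x) ->
  Dop (fun y => \sum_(i < n) F i y) x = \sum_(i < n) Dop (F i) x.
Proof.
move=> dF; rewrite Dop_fueter (@eq_fueter _ _ (fun u => \sum_(i < n) 'D_u (F i) x)).
  by rewrite fueter_sum.
by move=> u; rewrite -fct_sumE; apply: derive_sum => i; exact: diff_derivable.
Qed.

End QuaternionCalculus.

Section PartialSums.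
Variables (V : zmodType) (M : nat -> V).
Let S n := \sum_(k < n) M k.

Lemma sum_ord_rev n (G : nat -> V) :
  \sum_(k < n) G (n - k.+1)%N = \sum_(k < n) G k.
Proof. by rewrite -(big_mkord xpredT G) big_rev_mkord subn0. Qed.

Lemma sum_partial_sums n :
  \sum_(j < n.+1) S j + \sum_(j < n) M j *+ j.+1 = S n *+ n.+1.
Proof.
elim: n => [|n IH]; first by rewrite big_ord1 big_ord0 /S big_ord0 addr0.
rewrite big_ord_recr [X in _ + X]big_ord_recr /= addrACA IH addrCA -mulrnDl.
by rewrite /S big_ord_recr -/(S n) -mulrS.
Qed.

Lemma weighted_partial_sums m :
  \sum_(j < m.+1) S j *+ (m - j).+1 + \sum_(j < m.+1) M j *+ ((m - j) * j.+1)
  = \sum_(j < m.+1) S j *+ j.+1.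
Proof.
elim: m => [|m IH]; first by rewrite !big_ord1 mul0n mulr0n addr0.
rewrite big_ord_recr [X in _ + X]big_ord_recr [RHS]big_ord_recr /=.
rewrite subnn mul0n mulr0n addr0 mulr1n.
have -> : \sum_(j < m.+1) S j *+ (m.+1 - j).+1
    = \sum_(j < m.+1) S j *+ (m - j).+1 + \sum_(j < m.+1) S j.
  by rewrite -big_split; apply: eq_bigr => j _; rewrite subSn ?mulrSr // -ltnS.
have -> : \sum_(j < m.+1) M j *+ ((m.+1 - j) * j.+1)
    = \sum_(j < m.+1) M j *+ ((m - j) * j.+1) + \sum_(j < m.+1) M j *+ j.+1.
  rewrite -big_split; apply: eq_bigr => j _ /=.
  by rewrite subSn -1?ltnS // mulSn addnC mulrnDr.
have partial := sum_partial_sums m.+1; rewrite big_ord_recr /= in partial.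
by rewrite -IH -partial addrACA (addrAC (\sum_(j < m.+1) _)) -!addrA.
Qed.

(* the cancellation that makes D P_m vanish *)
Lemma antidiagonal_cancel m :
  \sum_(j < m.+1) (S j - S (m - j) + M (m - j) *+ j) *+ (m - j).+1 = 0.
Proof.
have rev (G : nat -> V) : \sum_(j < m.+1) G (m - j)%N = \sum_(j < m.+1) G j.
  by rewrite -(sum_ord_rev m.+1); apply: eq_bigr => j _; rewrite subSS.
rewrite (eq_bigr (fun j : 'I_m.+1 => S j *+ (m - j).+1 - S (m - j) *+ (m - j).+1
                     + M (m - j) *+ ((m - (m - j)) * (m - j).+1))); last first.
  by move=> j _; rewrite mulrnDl mulrnBl -mulrnA subKn // -ltnS.
rewrite big_split sumrB /= (rev (fun j => S j *+ j.+1))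
  (rev (fun j => M j *+ ((m - j) * j.+1))) /=.
by rewrite addrAC weighted_partial_sums subrr.
Qed.

End PartialSums.

Section Monomials.
Context {R : realType}.
Local Notation quat := (quat R).
Implicit Types x : quat.

Definition qmono (a b : nat) (x : quat) : quat :=
  qmul (qpow x a) (qpow (qconj x) b).

Lemma differentiable_qmono a b x : differentiable (qmono a b) x.
Proof.
apply: differentiable_qmul; apply: differentiable_qpow;
  last apply: differentiable_qconj; exact: differentiable_id_quat.
Qed.

Lemma derive_qmono a b x u : 'D_u (qmono a b) x =
  \sum_(k < a) qmul (qmul (qpow x k) u) (qmono (a - k.+1) b x)
  + \sum_(k < b) qmul (qmul (qmono a k x) (qconj u)) (qpow (qconj x) (b - k.+1)).
Proof.
have did := differentiable_id_quat x.
have dconj := differentiable_qconj _ _ did.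
have Did : 'D_u (fun y : quat => y) x = u by exact: derive_id.
rewrite /qmono derive_qmul; [|exact: differentiable_qpow..].
rewrite (derive_qpow _ _ _ _ did) (derive_qpow _ _ _ _ dconj) derive_qconj // Did.
by rewrite qmul_suml qmul_sumr; congr (_ + _); apply: eq_bigr => k _; rewrite !qmulA.
Qed.

(* since x and xbar commute, monomials multiply like commutative ones *)
Lemma qconj_qmono a b x : qconj (qmono a b x) = qmono b a x.
Proof. by rewrite /qmono qconj_mul !qconj_pow qconjK. Qed.
Lemma qmono_mulr a b e x : qmul (qmono a b x) (qpow (qconj x) e) = qmono a (b + e) x.
Proof. by rewrite /qmono -qmulA qpowD. Qed.
Lemma qmono_mull a b e x : qmul (qpow (qconj x) e) (qmono a b x) = qmono a (e + b) x.
Proof.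
by rewrite /qmono qmulA -(qpow_commute _ _ _ _ (qmul_conjC x)) -qmulA qpowD.
Qed.

Definition antidiag (m : nat) (x : quat) (k : nat) : quat := qmono k (m - k.+1) x.

Lemma Dop_qmono m a b x : (a + b)%N = m ->
  Dop (qmono a b) x = 2 *: (\sum_(k < b) antidiag m x k
                            - \sum_(k < a) antidiag m x k + antidiag m x a *+ b).
Proof.
move=> <-; rewrite Dop_fueter (eq_fueter (derive_qmono a b x)) fueterD !fueter_sum.
under eq_bigr do rewrite fueter_sandwich qmulZl qconj_pow qmono_mull.
under [X in _ + X]eq_bigr do
  rewrite fueter_conj_sandwich qconj_qmono qmulZl qmulDl !qmono_mulr.
rewrite -!scaler_sumr -(sum_ord_rev _ a).
have -> : \sum_(k < a) qmono (a - k.+1) (k + b) x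
    = \sum_(k < a) antidiag (a + b) x (a - k.+1).
  by apply: eq_bigr => k _; rewrite /antidiag; congr qmono; have := ltn_ord k; lia.
have -> : \sum_(k < b) (qmono a (k + (b - k.+1)) x + qmono k (a + (b - k.+1)) x)
    = \sum_(k < b) (antidiag (a + b) x a + antidiag (a + b) x k).
  by apply: eq_bigr => k _; rewrite /antidiag;
    congr (qmono _ _ _ + qmono _ _ _); have := ltn_ord k; lia.
rewrite big_split sumr_const card_ord /=.
by rewrite scaleNr -scalerN -scalerDr addrCA addrC (addrC (- _)).
Qed.

End Monomials.

Section HyperholomorphicPolynomials.
Context {R : realType}.
Local Notation quat := (quat R).
Local Notation Tcoef := (@Tcoef R).
Local Notation cm := (@cm R).

Lemma Tcoef_scale (V : lmodType R) m j (w : V) :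
  Tcoef m j *: (2 *: w) = (4 / ((m + 1)%:R * (m + 2)%:R)) *: (w *+ (m - j).+1).
Proof.
rewrite /Tcoef scalerA -[w *+ _]scaler_nat scalerA addn1.
by congr (_ *: _); ring.
Qed.

Definition alt_weight m : R := \sum_(j < m.+1) (-1) ^+ j * (m - j).+1%:R.

Lemma cm_alt_weight m : cm m = 2 / ((m + 1)%:R * (m + 2)%:R) * alt_weight m.
Proof.
rewrite /cm /alt_weight mulr_sumr.
by apply: eq_bigr => j _; rewrite /Tcoef addn1; ring.
Qed.

Lemma alt_weightS m : alt_weight m.+1 = m.+2%:R - alt_weight m.
Proof.
rewrite /alt_weight big_ord_recl expr0 mul1r subn0 -sumrN; congr (_ + _).
by apply: eq_bigr => j _; rewrite /= exprS subSS mulN1r mulNr.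
Qed.

Lemma alt_weight_bounds m : 1 <= alt_weight m <= m.+1%:R.
Proof.
elim: m => [|m IH]; first by rewrite /alt_weight big_ord1 expr0 mul1r subnn; lra.
by rewrite alt_weightS -[m.+2%:R]natr1; move: IH; lra.
Qed.

Lemma cm_gt0 m : 0 < cm m.
Proof.
rewrite cm_alt_weight; apply: mulr_gt0; last by have := alt_weight_bounds m; lra.
by apply: divr_gt0 => //; apply: mulr_gt0; rewrite ltr0n addn_gt0 orbT.
Qed.

Lemma Pm_qmono m (x : quat) :
  Pm m x = (cm m)^-1 *: \sum_(j < m.+1) Tcoef m j *: qmono (m - j) j x.
Proof. by []. Qed.

Lemma differentiable_Pm m (x : quat) : differentiable (Pm m) x.
Proof.
apply: differentiableZ; apply: differentiable_sum_quat => j.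
by apply: differentiableZ; exact: differentiable_qmono.
Qed.

Lemma Dop_Pm m (x : quat) : Dop (Pm m) x = 0.
Proof.
have dterm j : differentiable (fun y => Tcoef m j *: qmono (m - j) j y) x.
  by apply: differentiableZ; exact: differentiable_qmono.
rewrite (Dop_scale _ _ _ (differentiable_sum_quat _ _ _ dterm)) Dop_sum //.
under eq_bigr => j _.
  have degree : (m - j + j)%N = m by rewrite subnK // -ltnS.
  rewrite Dop_scale; last exact: differentiable_qmono.
  rewrite (Dop_qmono _ _ _ _ degree) Tcoef_scale.
  over.
by rewrite -scaler_sumr antidiagonal_cancel !scaler0.
Qed.

Lemma qconj_pure (a b c : R) : qconj (qmk 0 a b c) = (-1) *: qmk 0 a b c.
Proof. quat_ring. Qed.

Lemma Pm_pure m (x1 x2 x3 : R) : Pm m (qmk 0 x1 x2 x3) = qpow (qmk 0 x1 x2 x3) m.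
Proof.
set v := qmk 0 x1 x2 x3.
rewrite Pm_qmono (eq_bigr (fun j : 'I_m.+1 => ((-1) ^+ j * Tcoef m j) *: qpow v m)).
  by rewrite -scaler_suml scalerA mulVf ?scale1r //; exact/lt0r_neq0/cm_gt0.
move=> j _; rewrite /qmono qconj_pure qpowZ qmulZr qpowD subnK -1?ltnS //.
by rewrite scalerA mulrC.
Qed.

(* P_1(x) = 2 x + xbar = 3 x0 + x_vec *)
Lemma P1_formula (x : quat) : Pm 1 x = qmk (3 * q0 x) (q1 x) (q2 x) (q3 x).
Proof.
have [c0 c1] : (cm 1)^-1 * Tcoef 1 0 = 2 /\ (cm 1)^-1 * Tcoef 1 1 = 1.
  by rewrite /cm /Tcoef !big_ord_recr big_ord0 /= subn0 subnn; split; field.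
rewrite Pm_qmono !big_ord_recr big_ord0 /= add0r scalerDr !scalerA c0 c1 scale1r.
rewrite /qmono /=; quat_ring.
Qed.

Lemma P1_zeta (x : quat) : qmk (3 * q0 x) (q1 x) (q2 x) (q3 x) =
  qmul (zeta1 x) (qe1 R) + qmul (zeta2 x) (qe2 R) + qmul (zeta3 x) (qe3 R).
Proof. quat_ring. Qed.

End HyperholomorphicPolynomials.

Theorem mainTheorem3 (R : realType) :
  (forall m : nat,
     left_hyperholomorphic (@Pm R m) /\
     (forall x1 x2 x3 : R,
        Pm m (qmk 0 x1 x2 x3) = qpow (qmk 0 x1 x2 x3) m) /\
     is_CK_extension (fun x1 x2 x3 : R => qpow (qmk 0 x1 x2 x3) m) (@Pm R m))
  /\
  (forall x : quat R,
     Pm 1 x = qmul (zeta1 x) (qe1 R) + qmul (zeta2 x) (qe2 R)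
              + qmul (zeta3 x) (qe3 R) /\
     Pm 1 x = qmk (3 * q0 x) (q1 x) (q2 x) (q3 x)).
Proof.
split=> [m | x]; last by rewrite P1_formula P1_zeta.
have hyper : left_hyperholomorphic (@Pm R m).
  by split=> x; [exact: differentiable_Pm | exact: Dop_Pm].
by do !split => //; exact: Pm_pure.
Qed.
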